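(* Let $(Y_i,D_i,Z_i,X_i)$, $i=1,\dots,N$, be data with $Y_i\in\mathbb{R}$, $D_i,Z_i\in\{0,1\}$, $X_i\in\mathbb{R}^k$, where $X_i$ includes a constant component (equal to $1$ for all $i$). Let $F(x,\alpha)\in(0,1)$ be a parametric model for the instrument propensity score and let $\hat\alpha_{cb}$ satisfy the covariate balancing equations $$\frac1N\sum_{i=1}^N X_i\,\frac{Z_i-F(X_i,\hat\alpha_{cb})}{F(X_i,\hat\alpha_{cb})\big(1-F(X_i,\hat\alpha_{cb})\big)}=0 .$$ Write $\hat p_i=F(X_i,\hat\alpha_{cb})$, $\hat\kappa_{i1}=D_i\frac{Z_i-\hat p_i}{\hat p_i(1-\hat p_i)}$, $\hat\kappa_{i0}=(1-D_i)\frac{(1-Z_i)-(1-\hat p_i)}{\hat p_i(1-\hat p_i)}$, and define $$\tilde\tau_{t}=\Big[\sum_i\frac{D_iZ_i}{\hat p_i}-\sum_i\frac{D_i(1-Z_i)}{1-\hat p_i}\Big]^{-1}\Big[\sum_i\frac{Y_iZ_i}{\hat p_i}-\sum_i\frac{Y_i(1-Z_i)}{1-\hat p_i}\Big],\qquad \tilde\tau_{a,1}=\Big[\sum_i\hat\kappa_{i1}\Big]^{-1}\sum_i Y_i\frac{Z_i-\hat p_i}{\hat p_i(1-\hat p_i)},$$ $$\tilde\tau_{a,0}=\Big[\sum_i\hat\kappa_{i0}\Big]^{-1}\sum_i Y_i\frac{Z_i-\hat p_i}{\hat p_i(1-\hat p_i)},\qquad \tilde\tau_{a,10}=\Big[\sum_i\hat\kappa_{i1}\Big]^{-1}\sum_i\hat\kappa_{i1}Y_i-\Big[\sum_i\hat\kappa_{i0}\Big]^{-1}\sum_i\hat\kappa_{i0}Y_i,$$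 $$\hat\tau_{cb}=\frac{\big[\sum_i\frac{Z_i}{\hat p_i}\big]^{-1}\sum_i\frac{Y_iZ_i}{\hat p_i}-\big[\sum_i\frac{1-Z_i}{1-\hat p_i}\big]^{-1}\sum_i\frac{Y_i(1-Z_i)}{1-\hat p_i}}{\big[\sum_i\frac{Z_i}{\hat p_i}\big]^{-1}\sum_i\frac{D_iZ_i}{\hat p_i}-\big[\sum_i\frac{1-Z_i}{1-\hat p_i}\big]^{-1}\sum_i\frac{D_i(1-Z_i)}{1-\hat p_i}}$$ (assuming the denominators are nonzero). Then $\tilde\tau_t$ ($=\tilde\tau_{a,1}$), $\tilde\tau_{a,0}$ and $\tilde\tau_{a,10}$ are numerically identical and equal to $\hat\tau_{cb}$.
   Context: $\hat\alpha_{cb}$ is the just-identified covariate balancing estimator of the propensity score parameter (Imai–Ratkovic type), defined by the displayed sample moment equations. *)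

From HB Require Import structures.
From mathcomp Require Import all_boot all_order all_algebra.
Set Implicit Arguments. Unset Strict Implicit. Unset Printing Implicit Defensive.
Import Order.TTheory GRing.Theory Num.Theory.
Local Open Scope ring_scope.

Section Estimators.
Variables (R : realFieldType) (N : nat).
Variables (Y D Z p : 'I_N -> R).

Definition cbw (i : 'I_N) : R := (Z i - p i) / (p i * (1 - p i)).

Definition kappa1 (i : 'I_N) : R := D i * ((Z i - p i) / (p i * (1 - p i))).
Definition kappa0 (i : 'I_N) : R :=
  (1 - D i) * (((1 - Z i) - (1 - p i)) / (p i * (1 - p i))).

Definition tau_t_den : R :=
  \sum_i D i * Z i / p i - \sum_i D i * (1 - Z i) / (1 - p i).
Definition tau_t : R :=
  tau_t_den^-1 *
  (\sum_i Y i * Z i / p i - \sum_i Y i * (1 - Z i) / (1 - p i)).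

Definition tau_a1 : R := (\sum_i kappa1 i)^-1 * \sum_i Y i * cbw i.
Definition tau_a0 : R := (\sum_i kappa0 i)^-1 * \sum_i Y i * cbw i.
Definition tau_a10 : R :=
  (\sum_i kappa1 i)^-1 * (\sum_i kappa1 i * Y i)
  - (\sum_i kappa0 i)^-1 * (\sum_i kappa0 i * Y i).

Definition sZ1 : R := \sum_i Z i / p i.
Definition sZ0 : R := \sum_i (1 - Z i) / (1 - p i).
Definition tau_cb_den : R :=
  sZ1^-1 * (\sum_i D i * Z i / p i) - sZ0^-1 * (\sum_i D i * (1 - Z i) / (1 - p i)).
Definition tau_cb : R :=
  (sZ1^-1 * (\sum_i Y i * Z i / p i) - sZ0^-1 * (\sum_i Y i * (1 - Z i) / (1 - p i)))
  / tau_cb_den.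
End Estimators.

From HB Require Import structures.
From mathcomp Require Import all_boot all_order all_algebra.
From mathcomp Require Import ring.
Import Order.TTheory GRing.Theory Num.Theory.
Local Open Scope ring_scope.

(* The weight (Z - p) / (p (1 - p)) splits as Z / p - (1 - Z) / (1 - p), and
   kappa1, kappa0 are D times, resp. D - 1 times, this weight.  Hence every
   estimator is a ratio of sums of weighted Y's and D's.  The covariate
   balancing equation, read on the constant component of X, says that the
   weights sum to 0: this makes the two normalisations sZ1 and sZ0 equal and
   makes kappa0 and kappa1 have the same total, which collapses all the
   estimators to (sum_i D_i w_i)^-1 (sum_i Y_i w_i). *)

Lemma balance_const_sum (R : numFieldType) (N k : nat) (w : 'I_N -> R)
    (X : 'I_N -> 'rV[R]_k) (j : 'I_k) :
  (forall i, X i 0 j = 1) ->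
  (N%:R)^-1 *: \sum_i w i *: X i = 0 -> \sum_i w i = 0.
Proof.
move=> Xj1 /(congr1 (fun M : 'rV[R]_k => M 0 j)).
rewrite !mxE summxE.
under eq_bigr => i _ do rewrite mxE Xj1 mulr1.
case: N w X Xj1 => [|n] w _ _; first by rewrite big_ord0.
by move/eqP; rewrite mulf_eq0 invr_eq0 pnatr_eq0 /= => /eqP.
Qed.

Section Identities.
Variables (R : realFieldType) (N : nat) (Y D Z p : 'I_N -> R).
Hypotheses (p_neq0 : forall i, p i != 0) (p_neq1 : forall i, 1 - p i != 0).

Lemma cbwE i : cbw Z p i = Z i / p i - (1 - Z i) / (1 - p i).
Proof. by rewrite /cbw; field; rewrite p_neq0 p_neq1. Qed.

Lemma kappa0E i : kappa0 D Z p i = kappa1 D Z p i - cbw Z p i.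
Proof. by rewrite /kappa0 /kappa1 /cbw; ring. Qed.

Lemma tau_t_denE : tau_t_den D Z p = \sum_i kappa1 D Z p i.
Proof.
rewrite /tau_t_den -sumrB; apply: eq_bigr => i _.
by rewrite /kappa1 -/(cbw Z p i) cbwE; ring.
Qed.

Lemma sum_ipw_cbw :
  \sum_i Y i * Z i / p i - \sum_i Y i * (1 - Z i) / (1 - p i)
  = \sum_i Y i * cbw Z p i.
Proof. by rewrite -sumrB; apply: eq_bigr => i _; rewrite cbwE; ring. Qed.

Lemma tau_t_a1 : tau_t Y D Z p = tau_a1 Y D Z p.
Proof. by rewrite /tau_t /tau_a1 sum_ipw_cbw tau_t_denE. Qed.

Hypothesis sum_cbw0 : \sum_i cbw Z p i = 0.

Lemma sZ1_sZ0 : sZ1 Z p = sZ0 Z p.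
Proof.
apply/eqP; rewrite -subr_eq0 /sZ1 /sZ0 -sumrB; apply/eqP.
by rewrite -[RHS]sum_cbw0; apply: eq_bigr => i _; rewrite cbwE.
Qed.

Lemma sum_kappa0 : \sum_i kappa0 D Z p i = \sum_i kappa1 D Z p i.
Proof.
by rewrite (eq_bigr _ (fun i _ => kappa0E i)) sumrB sum_cbw0 subr0.
Qed.

Lemma tau_a0_a1 : tau_a0 Y D Z p = tau_a1 Y D Z p.
Proof. by rewrite /tau_a0 /tau_a1 sum_kappa0. Qed.

Lemma tau_a10_a1 : tau_a10 Y D Z p = tau_a1 Y D Z p.
Proof.
rewrite /tau_a10 /tau_a1 sum_kappa0.
have -> : \sum_i kappa0 D Z p i * Y i
          = \sum_i kappa1 D Z p i * Y i - \sum_i Y i * cbw Z p i.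
  by rewrite -sumrB; apply: eq_bigr => i _; rewrite kappa0E; ring.
by ring.
Qed.

Lemma tau_cb_a1 : sZ1 Z p != 0 -> tau_cb Y D Z p = tau_a1 Y D Z p.
Proof.
move=> sZ1_neq0.
rewrite /tau_cb /tau_cb_den -sZ1_sZ0 -!mulrBr sum_ipw_cbw -/(tau_t_den D Z p).
by rewrite tau_t_denE invfM invrK mulrACA mulVf // mul1r /tau_a1 mulrC.
Qed.

End Identities.

Theorem proposition2 (R : realFieldType) (N k : nat)
  (Y D Z : 'I_N -> R) (X : 'I_N -> 'rV[R]_k)
  (F : 'rV[R]_k -> 'rV[R]_k -> R) (alpha_cb : 'rV[R]_k) :
  (forall i, D i = 0 \/ D i = 1) ->
  (forall i, Z i = 0 \/ Z i = 1) ->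
  (exists j : 'I_k, forall i, X i 0 j = 1) ->
  (forall x a, 0 < F x a < 1) ->
  (N%:R)^-1 *: \sum_i ((Z i - F (X i) alpha_cb)
       / (F (X i) alpha_cb * (1 - F (X i) alpha_cb))) *: X i = 0 ->
  let p := fun i => F (X i) alpha_cb in
  tau_t_den D Z p != 0 ->
  \sum_i kappa1 D Z p i != 0 ->
  \sum_i kappa0 D Z p i != 0 ->
  sZ1 Z p != 0 -> sZ0 Z p != 0 ->
  tau_cb_den D Z p != 0 ->
  [/\ tau_t Y D Z p = tau_a1 Y D Z p,
      tau_t Y D Z p = tau_a0 Y D Z p,
      tau_t Y D Z p = tau_a10 Y D Z p &
      tau_t Y D Z p = tau_cb Y D Z p].
Proof.
move=> _ _ [j Xj1] F01 balance p _ _ _ sZ1_neq0 _ _.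
have p_neq0 i : p i != 0 by have /andP[p_gt0 _] := F01 (X i) alpha_cb; rewrite gt_eqF.
have p_neq1 i : 1 - p i != 0.
  by have /andP[_ p_lt1] := F01 (X i) alpha_cb; rewrite subr_eq0 gt_eqF.
have sum_cbw0 : \sum_i cbw Z p i = 0 by apply: balance_const_sum balance.
rewrite tau_t_a1 //; split.
- by [].
- by rewrite tau_a0_a1.
- by rewrite tau_a10_a1.
- by rewrite tau_cb_a1.
Qed.
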